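(* Consider a POMDP with finite state space $\mathcal S$, finite observation space $\mathcal Y$, finite action space $\mathcal A$, transition kernel $P(s'\mid s,a)$, observation kernel $O(y'\mid s',a)$, reward $r\colon\mathcal S\times\mathcal A\to\mathbb R$ and discount $\gamma\in[0,1)$; histories $H_t=(Y_1,A_1,\dots,Y_t)\in\mathcal H_t$. Let $\mathcal Z$ be finite, $f\colon\mathcal Z\times\mathcal Y\times\mathcal A\to\mathcal Z$ a recurrent update with $Z_{t+1}=f(Z_t,Y_{t+1},A_t)$, and write $Z_t=\sigma_t(H_t)$. Let $\pi_{\mathrm{expl}}\colon\mathcal Z\to\Delta(\mathcal A)$ be an exploration policy such that $\{(S_t,Y_t,Z_t,A_t)\}_{t\ge1}$ has a unique stationary distribution $\xi$ with full support. Define $r_\xi(z,a)=\sum_s r(s,a)\xi(s\mid z,a)$, $P_\xi(z'\mid z,a)=\sum_s\xi(s\mid z,a)\sum_{s'}P(s'\mid s,a)\sum_{y'}O(y'\mid s',a)\mathbb 1\{z'=f(z,y',a)\}$, let $Q^\star_\xi$ be the unique fixed point of $Q(z,a)=r_\xi(z,a)+\gamma\sum_{z'}P_\xi(z'\mid z,a)\max_{\tilde a}Q(z',\tilde a)$, $V^\star_\xi(z)=\max_aQ^\star_\xi(z,a)$, $\pi^\star_\xi(z)=\arg\max_aQ^\star_\xi(z,a)$ (deterministic tie-breaking). Let $\mathfrak F$ be any class of real-valued functions on $\mathcal Z$, and define $$\varepsilon_t=\max_{h_t,a_t}\big|\mathbb E[r(S_t,A_t)\mid H_t=h_t,A_t=a_t]-r_\xi(\sigma_t(h_t),a_t)\big|,$$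 $$\delta_t=\max_{h_t,a_t}d_{\mathfrak F}\big(\mathbb P(Z_{t+1}=\cdot\mid H_t=h_t,A_t=a_t),P_\xi(\cdot\mid\sigma_t(h_t),a_t)\big),$$ $\bar\varepsilon_t=(1-\gamma)\sum_{\tau\ge t}\gamma^{\tau-t}\varepsilon_\tau$, $\bar\delta_t=(1-\gamma)\sum_{\tau\ge t}\gamma^{\tau-t}\delta_\tau$. Let $\tilde\pi$ be the history-dependent policy $\tilde\pi_t(h_t)=\pi^\star_\xi(\sigma_t(h_t))$. Let $V^\star_t,Q^\star_t$ be the optimal value and action-value functions of the POMDP and $V^{\tilde\pi}_t$ the value function of $\tilde\pi$. Then for all $t$, $h_t\in\mathcal H_t$, $a_t\in\mathcal A$: $$|Q^\star_t(h_t,a_t)-Q^\star_\xi(\sigma_t(h_t),a_t)|\le(1-\gamma)^{-1}[\bar\varepsilon_t+\gamma\bar\delta_t\rho_{\mathfrak F}(V^\star_\xi)],$$ $$|V^\star_t(h_t)-V^\star_\xi(\sigma_t(h_t))|\le(1-\gamma)^{-1}[\bar\varepsilon_t+\gamma\bar\delta_t\rho_{\mathfrak F}(V^\star_\xi)],$$ $$|V^\star_t(h_t)-V^{\tilde\pi}_t(h_t)|\le2(1-\gamma)^{-1}[\bar\varepsilon_t+\gamma\bar\delta_t\rho_{\mathfrak F}(V^\star_\xi)].$$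
   Context: $d_{\mathfrak F}(\mu,\nu)=\sup_{g\in\mathfrak F}|\int g\,d\mu-\int g\,d\nu|$ is the integral probability metric and $\rho_{\mathfrak F}(g)=\inf\{\rho>0:\rho^{-1}g\in\mathfrak F\}$ the Minkowski functional. $V^\pi_t(h_t)=\mathbb E^\pi[\sum_{\tau\ge t}\gamma^{\tau-t}r(S_\tau,A_\tau)\mid H_t=h_t]$; $V^\star_t,Q^\star_t$ are the value and Q-functions of a policy optimal for all $t$ and histories, with $Q^\pi_t(h_t,a_t)=\mathbb E^\pi[r(S_t,A_t)+\gamma V^\pi_{t+1}(H_{t+1})\mid H_t=h_t,A_t=a_t]$. $\xi(s\mid z,a)$ is the conditional of the stationary distribution. $Q^\star_\xi$ is the almost-sure limit of tabular recurrent Q-learning under the exploration policy. *)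

From HB Require Import structures.
From mathcomp Require Import all_boot all_order all_algebra.
From mathcomp Require Import all_classical all_reals all_analysis.
Set Implicit Arguments. Unset Strict Implicit. Unset Printing Implicit Defensive.
Import Order.TTheory GRing.Theory Num.Theory numFieldNormedType.Exports.
Local Open Scope classical_set_scope.
Local Open Scope ring_scope.

(* Time is 0-based: index n corresponds to the paper's t = n+1. *)
Section POMDP.
Variable R : realType.
Variables (S Y A Z : finType).

Definition is_dist (T : finType) (p : T -> R) :=
  (forall x, 0 <= p x) /\ \sum_x p x = 1.

Definition maxAct (F : A -> R) : R :=
  match [pick a : A] with Some a0 => \big[Num.max/F a0]_a F a | None => 0 end.

(* history H_{n+1} = (Y_1, A_1, Y_2, ..., A_n, Y_{n+1}):
   first observation and the n (action, next observation) pairs, newest first *)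
Definition hist (n : nat) := (Y * n.-tuple (A * Y))%type.
Definition hext n (h : hist n) (a : A) (y : Y) : hist n.+1 :=
  (h.1, cons_tuple (a, y) h.2).
Definition hprev n (h : hist n.+1) : hist n := (h.1, behead_tuple h.2).

Variables (P : S -> A -> S -> R)   (* P s a s' = P(s' | s, a) *)
          (O : S -> A -> Y -> R)   (* O s' a y' = O(y' | s', a) *)
          (nu : S -> Y -> R)       (* initial joint law of (S_1, Y_1) *)
          (r : S -> A -> R) (gamma : R)
          (f : Z -> Y -> A -> Z)
          (init : Y -> Z).         (* Z_1 = init(Y_1) *)

(* alpha h s = P(H_n = h, S_n = s) with the policy factors removed
   (they do not depend on s and cancel in all conditional probabilities) *)
Fixpoint alpha (n : nat) : hist n -> S -> R :=
  match n return hist n -> S -> R with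
  | 0 => fun h s => nu s h.1
  | m.+1 => fun h s' =>
      let ay := thead h.2 in
      \sum_s alpha (hprev h) s * P s ay.1 s' * O s' ay.1 ay.2
  end.

Fixpoint sigma (n : nat) : hist n -> Z :=
  match n return hist n -> Z with
  | 0 => fun h => init h.1
  | m.+1 => fun h => let ay := thead h.2 in f (sigma (hprev h)) ay.2 ay.1
  end.

(* history has positive probability (under any policy giving positive
   probability to the actions it contains) *)
Definition possible n (h : hist n) : bool := 0 < \sum_s alpha h s.

(* belief P(S_n = s | H_n = h) *)
Definition belief n (h : hist n) (s : S) : R := alpha h s / \sum_s' alpha h s'.

(* E[r(S_n, A_n) | H_n = h, A_n = a] *)
Definition rbar n (h : hist n) (a : A) : R := \sum_s belief h s * r s a.

(* P(Y_{n+1} = y | H_n = h, A_n = a) *)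
Definition py n (h : hist n) (a : A) (y : Y) : R :=
  \sum_s belief h s * \sum_s' P s a s' * O s' a y.

(* P(Z_{n+1} = z | H_n = h, A_n = a) *)
Definition pz n (h : hist n) (a : A) (z : Z) : R :=
  \sum_y py h a y * (f (sigma h) y a == z)%:R.

Definition policy := forall n, hist n -> A -> R.
Definition is_policy (pol : policy) := forall n (h : hist n), is_dist (pol n h).

(* W pol N n h = E^pol[ sum_{k < N} gamma^k r(S_{n+k}, A_{n+k}) | H_n = h ] *)
Fixpoint W (pol : policy) (N : nat) : forall n, hist n -> R :=
  match N with
  | 0 => fun _ _ => 0
  | N'.+1 => fun n h => \sum_a pol n h a *
      (rbar h a + gamma * \sum_y py h a y * W pol N' (hext h a y))
  end.

Definition Vpi (pol : policy) n (h : hist n) : R := limn (fun N => W pol N h).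

Definition Vstar n (h : hist n) : R :=
  sup [set Vpi pol h | pol in [set pol | is_policy pol]].

Definition Qstar n (h : hist n) (a : A) : R :=
  rbar h a + gamma * \sum_y py h a y * Vstar (hext h a y).

Variable piexpl : Z -> A -> R.

Definition is_stationary (xi : S -> Y -> Z -> A -> R) :=
  (forall s y z a, 0 <= xi s y z a) /\
  \sum_s \sum_y \sum_z \sum_a xi s y z a = 1 /\
  forall s' y' z' a', xi s' y' z' a' =
    \sum_s \sum_y \sum_z \sum_a xi s y z a * P s a s' * O s' a y' *
        (f z y' a == z')%:R * piexpl z' a'.

Variable xi : S -> Y -> Z -> A -> R.

Definition xicond (s : S) (z : Z) (a : A) : R :=
  (\sum_y xi s y z a) / (\sum_s' \sum_y xi s' y z a).

Definition rxi (z : Z) (a : A) : R := \sum_s r s a * xicond s z a.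

Definition Pxi (z : Z) (a : A) (z' : Z) : R :=
  \sum_s xicond s z a * \sum_s' P s a s' *
     \sum_y' O s' a y' * (z' == f z y' a)%:R.

Definition is_Qxi (Q : Z -> A -> R) :=
  forall z a, Q z a = rxi z a + gamma * \sum_z' Pxi z a z' * maxAct (Q z').

Definition Vxi (Q : Z -> A -> R) (z : Z) : R := maxAct (Q z).

Definition dF (F : set (Z -> R)) (mu nu' : Z -> R) : \bar R :=
  ereal_sup [set (`| \sum_z g z * mu z - \sum_z g z * nu' z |)%:E | g in F].

Definition rhoF (F : set (Z -> R)) (g : Z -> R) : \bar R :=
  ereal_inf [set x%:E | x in [set x : R | 0 < x /\ F (fun z => x^-1 * g z)]].

Variable F : set (Z -> R).

Definition eps n : \bar R :=
  \big[Order.max/0%E]_(h : hist n | possible h)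
    \big[Order.max/0%E]_(a : A) (`| rbar h a - rxi (sigma h) a |)%:E.

Definition delta n : \bar R :=
  \big[Order.max/0%E]_(h : hist n | possible h)
    \big[Order.max/0%E]_(a : A) dF F (pz h a) (Pxi (sigma h) a).

Definition discbar (x : nat -> \bar R) n : \bar R :=
  ((1 - gamma)%:E * \sum_(0 <= k <oo) ((gamma ^+ k)%:E * x (n + k)%N))%E.

(* product of nonnegative extended reals with the convention 0 * (+oo) = +oo *)
Definition mulinf (x y : \bar R) : \bar R :=
  if (x == +oo%E) || (y == +oo%E) then +oo%E else (x * y)%E.

Definition bound (Q : Z -> A -> R) n : \bar R :=
  ((1 - gamma)^-1%:E *
   (discbar eps n + mulinf gamma%:E (mulinf (discbar delta n) (rhoF F (Vxi Q)))))%E.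

End POMDP.

Definition pol_of_agent (R : realType) (Y A Z : finType)
  (f : Z -> Y -> A -> Z) (init : Y -> Z) (pistar : Z -> A) : policy R Y A :=
  fun n h a => (a == pistar (sigma f init h))%:R.

(* A Bellman backup at h differs from the xi-backup
   at sigma(h) by the reward error eps_n plus gamma times the gap between the
   averages of V*_xi under the law of Z_{n+1} and under P_xi; that gap is at
   most delta_n rho_F(V*_xi), since V*_xi / x lies in F for x arbitrarily close
   to rho_F(V*_xi).  Unrolling N backups, the N-step return of any policy
   exceeds V*_xi(sigma(h)) by at most
   sum_{k<N} gamma^k (eps_{n+k} + gamma delta_{n+k} rho_F(V*_xi)) + O(gamma^N),
   and the return of the greedy agent-state policy falls short of it by at most
   as much.  Letting N -> oo and taking the supremum over policies bounds V*,
   hence Q*, and the triangle inequality bounds V* - V^pi~. *)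

From Pilot Require Import Defs.
From mathcomp Require Import all_boot all_order all_algebra.
From mathcomp Require Import all_classical all_reals all_analysis.
From mathcomp Require Import ring lra.
Import Order.TTheory GRing.Theory Num.Theory numFieldNormedType.Exports.
Local Open Scope classical_set_scope.
Local Open Scope ring_scope.
Set Implicit Arguments. Unset Strict Implicit.

Lemma sum_indicator_mul (R : nzRingType) (T : finType) (G : T -> R) (w : T) :
  \sum_z (z == w)%:R * G z = G w.
Proof.
rewrite (bigD1 w) //= eqxx mul1r big1 ?addr0 // => z /negbTE ->.
by rewrite mul0r.
Qed.

Section SubprobabilityAverage.
Variables (R : realFieldType) (T : finType) (p : T -> R).
Hypotheses (p_ge0 : forall i, 0 <= p i) (p_sum_le1 : \sum_i p i <= 1).

Lemma subprob_avg_le (X : T -> R) b : 0 <= b ->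
  (forall i, 0 < p i -> X i <= b) -> \sum_i p i * X i <= b.
Proof.
move=> b_ge0 X_le; apply: le_trans (_ : \sum_i p i * b <= _).
  apply: ler_sum => i _; have [->|p_gt0] := eqVneq (p i) 0; first by rewrite !mul0r.
  by rewrite ler_wpM2l // X_le // lt_def p_gt0 p_ge0.
by rewrite -mulr_suml ler_piMl.
Qed.

Lemma subprob_avg_norm_le (X : T -> R) b : 0 <= b ->
  (forall i, 0 < p i -> `|X i| <= b) -> `|\sum_i p i * X i| <= b.
Proof.
move=> b_ge0 X_le; apply: le_trans (ler_norm_sum _ _ _) _.
under eq_bigr do rewrite normrM ger0_norm //.
exact: subprob_avg_le.
Qed.

End SubprobabilityAverage.

Lemma cvgn_geometric_increments (R : realType) (u : R ^nat) (C q : R) :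
  `|q| < 1 -> (forall N, `|u N.+1 - u N| <= C * q ^+ N) -> cvgn u.
Proof.
move=> q_lt1 du_le.
have -> : u = (fun N => u 0%N + series (telescope u) N).
  by apply: funext => N; rewrite -eq_sum_telescope.
apply: is_cvgD; first exact: is_cvg_cst.
apply: normed_cvg.
apply: (@series_le_cvg _ (fun N => `|telescope u N|) (geometric C q)).
- by [].
- by move=> N; exact: le_trans (normr_ge0 _) (du_le N).
- exact: du_le.
- exact: is_cvg_geometric_series.
Qed.

Lemma limn_le_geometric_slack (R : realType) (u : R ^nat) (b C q : R) :
  `|q| < 1 -> cvgn u -> (forall N, u N <= b + C * q ^+ N) -> limn u <= b.
Proof.
move=> q_lt1 u_cvg u_le.
have slack_cvg : (fun N => b + C * q ^+ N) @ \oo --> b.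
  rewrite -[X in _ --> X]addr0; apply: cvgD; first exact: cvg_cst.
  exact: cvg_geometric.
rewrite -(cvg_lim _ slack_cvg) //; apply: ler_lim => //.
- exact: cvgP slack_cvg.
- exact: nearW.
Qed.

Lemma ipm_gap_le (R : realType) (Z : finType) (F : set (Z -> R))
    (g mu nu : Z -> R) (d p : R) :
  (dF F mu nu <= d%:E)%E -> rhoF F g = p%:E ->
  `|\sum_z g z * mu z - \sum_z g z * nu z| <= d * p.
Proof.
move=> dF_le rho_p; set D := `|_|.
have le_scaled x : 0 < x -> F (fun z => x^-1 * g z) -> D <= x * d.
  move=> x_gt0 Fx; rewrite -ler_pdivrMl // -lee_fin; apply: le_trans dF_le.
  apply: ereal_sup_ubound; exists (fun z => x^-1 * g z) => //.
  have xV_ge0 : 0 <= x^-1 by rewrite invr_ge0 ltW.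
  rewrite /D -[in RHS](ger0_norm xV_ge0) -normrM mulrBr !mulr_sumr.
  by congr (`|_ - _|)%:E; apply: eq_bigr => z _; rewrite mulrA.
have [x [x_gt0 Fx]] : exists x, 0 < x /\ F (fun z => x^-1 * g z).
  apply: contrapT => no_x; move: rho_p; rewrite /rhoF.
  suff -> : [set x%:E | x in [set x : R | 0 < x /\ F (fun z => x^-1 * g z)]] = set0.
    by rewrite ereal_inf0.
  by apply/seteqP; split => // t [x x_adm _]; apply: no_x; exists x.
have [d0|d_neq0] := eqVneq d 0.
  by rewrite d0 mul0r; have := le_scaled x x_gt0 Fx; rewrite d0 mulr0.
have d_gt0 : 0 < d.
  rewrite lt_def d_neq0 -(pmulr_rge0 _ x_gt0).
  exact: le_trans (normr_ge0 _) (le_scaled x x_gt0 Fx).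
rewrite mulrC -ler_pdivrMr // -lee_fin -rho_p.
apply: le_ereal_inf_tmp => _ [y [y_gt0 Fy] <-]; rewrite lee_fin ler_pdivrMr //.
exact: le_scaled.
Qed.

Lemma EFin_le_mulinf (R : realType) (c : R) (x y : \bar R) :
  (0 <= x)%E -> (0 <= y)%E ->
  (forall d p, x = d%:E -> y = p%:E -> c <= d * p) -> (c%:E <= mulinf x y)%E.
Proof.
case: x => [d| |] //; case: y => [p| |] // _ _ c_le; rewrite /mulinf /= ?leey //.
by rewrite lee_fin c_le.
Qed.

Lemma mulinf_ge0 (R : realType) (x y : \bar R) :
  (0 <= x)%E -> (0 <= y)%E -> (0 <= mulinf x y)%E.
Proof. by move=> x_ge0 y_ge0; rewrite /mulinf; case: ifP => // _; exact: mule_ge0. Qed.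

Lemma is_dist_sum_le1 (R : realType) (T : finType) (p : T -> R) :
  is_dist p -> \sum_i p i <= 1.
Proof. by case=> _ ->. Qed.

Lemma maxAct_ge (R : realType) (A : finType) (G : A -> R) a : G a <= maxAct G.
Proof.
rewrite /maxAct; case: pickP => [a0 _|no_act]; last by have := no_act a.
exact: le_bigmax.
Qed.

Section AgentStateComparison.
Variables (R : realType) (S Y A Z : finType)
  (P : S -> A -> S -> R) (O : S -> A -> Y -> R) (nu : S -> Y -> R)
  (r : S -> A -> R) (gamma : R) (f : Z -> Y -> A -> Z) (init : Y -> Z)
  (xi : S -> Y -> Z -> A -> R) (Qxi : Z -> A -> R) (pistar : Z -> A)
  (F : set (Z -> R)).
Hypothesis P_dist : forall s a, is_dist (P s a).
Hypothesis O_dist : forall s' a, is_dist (O s' a).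
Hypothesis nu_dist : is_dist (fun sy : S * Y => nu sy.1 sy.2).
Hypotheses (gamma_ge0 : 0 <= gamma) (gamma_lt1 : gamma < 1).
Hypothesis Qxi_fixpoint : is_Qxi P O r gamma f xi Qxi.
Hypothesis pistar_greedy : forall z, Qxi z (pistar z) = maxAct (Qxi z).

Local Notation hist := (hist Y A).
Local Notation alpha := (alpha P O nu).
Local Notation sigma := (sigma f init).
Local Notation belief := (belief P O nu).
Local Notation rbar := (rbar P O nu r).
Local Notation py := (py P O nu).
Local Notation pz := (pz P O nu f init).
Local Notation possible := (possible P O nu).
Local Notation W := (W P O nu r gamma).
Local Notation Vpi := (Vpi P O nu r gamma).
Local Notation Vstar := (Vstar P O nu r gamma).
Local Notation Qstar := (Qstar P O nu r gamma).
Local Notation rxi := (rxi r xi).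
Local Notation Pxi := (Pxi P O f xi).
Local Notation Vxi := (Vxi Qxi).
Local Notation greedy := (pol_of_agent R f init pistar).

Lemma hprev_hext n (h : hist n) a y : hprev (hext h a y) = h.
Proof. by case: h => y0 t; congr pair; apply: val_inj. Qed.

Lemma alpha_hext n (h : hist n) a y s' :
  alpha (hext h a y) s' = \sum_s alpha h s * P s a s' * O s' a y.
Proof. by rewrite /= hprev_hext. Qed.

Lemma sigma_hext n (h : hist n) a y : sigma (hext h a y) = f (sigma h) y a.
Proof. by rewrite /= hprev_hext. Qed.

Lemma alpha_ge0 n (h : hist n) s : 0 <= alpha h s.
Proof.
elim: n h s => [|n IH] h s /=; first exact: (nu_dist.1 (s, h.1)).
apply: sumr_ge0 => s0 _.
by rewrite !mulr_ge0 ?IH ?(P_dist _ _).1 ?(O_dist _ _).1.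
Qed.

Lemma belief_ge0 n (h : hist n) s : 0 <= belief h s.
Proof.
by rewrite divr_ge0 ?alpha_ge0 //; apply: sumr_ge0 => s' _; exact: alpha_ge0.
Qed.

Lemma sum_belief_le1 n (h : hist n) : \sum_s belief h s <= 1.
Proof.
rewrite -mulr_suml.
have [->|mass_neq0] := eqVneq (\sum_s alpha h s) 0; first by rewrite invr0 mulr0.
by rewrite mulfV.
Qed.

Lemma py_ge0 n (h : hist n) a y : 0 <= py h a y.
Proof.
apply: sumr_ge0 => s _; rewrite mulr_ge0 ?belief_ge0 //.
by apply: sumr_ge0 => s' _; rewrite mulr_ge0 ?(P_dist _ _).1 ?(O_dist _ _).1.
Qed.

Lemma sum_py n (h : hist n) a : \sum_y py h a y = \sum_s belief h s.
Proof.
rewrite exchange_big /=; apply: eq_bigr => s _.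
rewrite -mulr_sumr exchange_big /= (eq_bigr (P s a)) ?(P_dist s a).2 ?mulr1 //.
by move=> s' _; rewrite -mulr_sumr (O_dist s' a).2 mulr1.
Qed.

Lemma sum_py_le1 n (h : hist n) a : \sum_y py h a y <= 1.
Proof. by rewrite sum_py sum_belief_le1. Qed.

Lemma possible_hext n (h : hist n) a y :
  possible h -> 0 < py h a y -> possible (hext h a y).
Proof.
rewrite /Defs.possible => mass_gt0 py_gt0.
suff -> : \sum_s' alpha (hext h a y) s' = (\sum_s alpha h s) * py h a y.
  exact: mulr_gt0.
rewrite (eq_bigr _ (fun s' _ => alpha_hext h a y s')) exchange_big /=.
rewrite mulr_sumr; apply: eq_bigr => s _.
rewrite mulrA [X in X * _]mulrCA mulfV ?gt_eqF // mulr1 mulr_sumr.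
by apply: eq_bigr => s' _; rewrite mulrA.
Qed.

Lemma py_avg_le n (h : hist n) a (D : Y -> R) b : possible h -> 0 <= b ->
  (forall y, possible (hext h a y) -> D y <= b) -> \sum_y py h a y * D y <= b.
Proof.
move=> h_poss b_ge0 D_le.
apply: (subprob_avg_le (py_ge0 h a) (sum_py_le1 h a)) => // y py_gt0.
exact/D_le/possible_hext.
Qed.

Lemma py_avg_norm_le n (h : hist n) a (D : Y -> R) b : possible h -> 0 <= b ->
  (forall y, possible (hext h a y) -> `|D y| <= b) ->
  `|\sum_y py h a y * D y| <= b.
Proof.
move=> h_poss b_ge0 D_le.
apply: (subprob_avg_norm_le (py_ge0 h a) (sum_py_le1 h a)) => // y py_gt0.
exact/D_le/possible_hext.
Qed.

Lemma sum_pz n (h : hist n) a (G : Z -> R) :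
  \sum_z G z * pz h a z = \sum_y py h a y * G (sigma (hext h a y)).
Proof.
under eq_bigr do rewrite mulr_sumr.
rewrite exchange_big; apply: eq_bigr => y _.
rewrite sigma_hext -(sum_indicator_mul G (f (sigma h) y a)) mulr_sumr.
by apply: eq_bigr => z _; rewrite eq_sym; ring.
Qed.

Definition rmax := \big[Num.max/0]_(sa : S * A) `|r sa.1 sa.2|.

Lemma rbar_norm_le n (h : hist n) a : `|rbar h a| <= rmax.
Proof.
apply: (subprob_avg_norm_le (belief_ge0 h) (sum_belief_le1 h)) => [|s _].
  exact: bigmax_ge_id.
exact: (le_bigmax _ (fun sa : S * A => `|r sa.1 sa.2|) (s, a)).
Qed.

Definition backup n (h : hist n) a (X : forall m, hist m -> R) : R :=
  rbar h a + gamma * \sum_y py h a y * X _ (hext h a y).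

Lemma backupB n (h : hist n) a (X X' : forall m, hist m -> R) :
  backup h a X - backup h a X' =
  gamma * \sum_y py h a y * (X _ (hext h a y) - X' _ (hext h a y)).
Proof.
rewrite /backup opprD addrACA subrr add0r -mulrBr -sumrB.
by congr (_ * _); apply: eq_bigr => y _; rewrite mulrBr.
Qed.

Lemma W_succ (pol : policy R Y A) N n (h : hist n) :
  W pol N.+1 h = \sum_a pol n h a * backup h a (W pol N).
Proof. by []. Qed.

Lemma W_increment_le (pol : policy R Y A) : is_policy pol ->
  forall N n (h : hist n), `|W pol N.+1 h - W pol N h| <= rmax * gamma ^+ N.
Proof.
move=> pol_dist; have rmax_ge0 : 0 <= rmax by exact: bigmax_ge_id.
elim=> [|N IH] n h.
  rewrite W_succ subr0 expr0 mulr1.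
  apply: (subprob_avg_norm_le (pol_dist n h).1 (is_dist_sum_le1 (pol_dist n h))) => // a _.
  rewrite /backup big1 ?mulr0 ?addr0 ?rbar_norm_le // => y _; exact: mulr0.
rewrite W_succ [W pol N.+1 h]W_succ -sumrB.
under eq_bigr do rewrite -mulrBr backupB.
apply: (subprob_avg_norm_le (pol_dist n h).1 (is_dist_sum_le1 (pol_dist n h))).
  by rewrite mulr_ge0 ?exprn_ge0.
move=> a _; rewrite normrM ger0_norm // exprS mulrCA ler_wpM2l //.
apply: (subprob_avg_norm_le (py_ge0 h a) (sum_py_le1 h a)) => [|y _].
  by rewrite mulr_ge0 ?exprn_ge0.
exact: IH.
Qed.

Lemma W_cvg (pol : policy R Y A) : is_policy pol ->
  forall n (h : hist n), cvgn (fun N => W pol N h).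
Proof.
move=> pol_dist n h; apply: (@cvgn_geometric_increments _ _ rmax gamma).
  by rewrite ger0_norm.
by move=> N; exact: W_increment_le.
Qed.

Lemma greedy_is_policy : is_policy greedy.
Proof.
move=> n h; split=> [a|]; first by rewrite ler0n.
rewrite -[RHS](sum_indicator_mul (fun=> 1) (pistar (sigma h))).
by apply: eq_bigr => a _; rewrite mulr1.
Qed.

Lemma W_greedy_succ N n (h : hist n) :
  W greedy N.+1 h = backup h (pistar (sigma h)) (W greedy N).
Proof. exact: sum_indicator_mul. Qed.

Definition reward_err k : R :=
  \big[Num.max/0]_(h : hist k | possible h)
    \big[Num.max/0]_a `|rbar h a - rxi (sigma h) a|.

(* delta_k of the paper, tested on the single function V*_xi *)
Definition transport_err k : R :=
  \big[Num.max/0]_(h : hist k | possible h)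
    \big[Num.max/0]_a `|\sum_z Vxi z * pz h a z - \sum_z Vxi z * Pxi (sigma h) a z|.

Definition step_err k := reward_err k + gamma * transport_err k.

Definition disc_err n N := \sum_(k < N) gamma ^+ k * step_err (n + k).

Lemma reward_err_ge0 k : 0 <= reward_err k.
Proof. exact: bigmax_ge_id. Qed.

Lemma transport_err_ge0 k : 0 <= transport_err k.
Proof. exact: bigmax_ge_id. Qed.

Lemma step_err_ge0 k : 0 <= step_err k.
Proof. by rewrite addr_ge0 ?reward_err_ge0 // mulr_ge0 ?transport_err_ge0. Qed.

Lemma le_reward_err n (h : hist n) a : possible h ->
  `|rbar h a - rxi (sigma h) a| <= reward_err n.
Proof.
move=> h_poss; apply: le_trans (le_bigmax_cond _ _ h_poss).
exact: (le_bigmax _ (fun a => `|rbar h a - rxi (sigma h) a|)).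
Qed.

Lemma le_transport_err n (h : hist n) a : possible h ->
  `|\sum_z Vxi z * pz h a z - \sum_z Vxi z * Pxi (sigma h) a z| <= transport_err n.
Proof.
move=> h_poss; apply: le_trans (le_bigmax_cond _ _ h_poss).
exact: (le_bigmax _ (fun a =>
  `|\sum_z Vxi z * pz h a z - \sum_z Vxi z * Pxi (sigma h) a z|)).
Qed.

Lemma disc_err0 n : disc_err n 0 = 0.
Proof. by rewrite /disc_err big_ord0. Qed.

Lemma disc_err_succ n N : disc_err n N.+1 = step_err n + gamma * disc_err n.+1 N.
Proof.
rewrite /disc_err big_ord_recl /= expr0 mul1r addn0 mulr_sumr; congr (_ + _).
by apply: eq_bigr => k _; rewrite /bump /= add1n exprS -mulrA addSnnS.
Qed.

Lemma disc_err_ge0 n N : 0 <= disc_err n N.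
Proof. by apply: sumr_ge0 => k _; rewrite mulr_ge0 ?exprn_ge0 ?step_err_ge0. Qed.

Lemma backup_sub_Qxi_le n (h : hist n) a (X : forall m, hist m -> R) :
  possible h ->
  `|backup h a X - Qxi (sigma h) a
     - gamma * \sum_y py h a y * (X _ (hext h a y) - Vxi (sigma (hext h a y)))|
  <= step_err n.
Proof.
move=> h_poss.
suff -> : backup h a X - Qxi (sigma h) a
     - gamma * \sum_y py h a y * (X _ (hext h a y) - Vxi (sigma (hext h a y)))
   = (rbar h a - rxi (sigma h) a)
     + gamma * (\sum_z Vxi z * pz h a z - \sum_z Vxi z * Pxi (sigma h) a z).
  apply: le_trans (ler_normD _ _) _; rewrite normrM ger0_norm //.
  by rewrite lerD ?le_reward_err // ler_wpM2l ?le_transport_err.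
have Pxi_avg : \sum_z Vxi z * Pxi (sigma h) a z
             = \sum_z Pxi (sigma h) a z * maxAct (Qxi z).
  by apply: eq_bigr => z _; rewrite mulrC.
rewrite /backup Pxi_avg sum_pz (Qxi_fixpoint (sigma h) a).
under [X in _ - gamma * X]eq_bigr do rewrite mulrBr.
rewrite sumrB; ring.
Qed.

Definition vmax := \big[Num.max/0]_z `|Vxi z|.

Lemma Vxi_norm_le z : `|Vxi z| <= vmax.
Proof. exact: (le_bigmax _ (fun z => `|Vxi z|)). Qed.

Lemma disc_err_slack_ge0 n N : 0 <= disc_err n N + vmax * gamma ^+ N.
Proof. by rewrite addr_ge0 ?disc_err_ge0 // mulr_ge0 ?exprn_ge0 ?bigmax_ge_id. Qed.

Lemma W_sub_Vxi_le (pol : policy R Y A) : is_policy pol ->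
  forall N n (h : hist n), possible h ->
  W pol N h - Vxi (sigma h) <= disc_err n N + vmax * gamma ^+ N.
Proof.
move=> pol_dist; elim=> [|N IH] n h h_poss.
  rewrite disc_err0 expr0 mulr1 /= !add0r.
  by have := Vxi_norm_le (sigma h); rewrite ler_norml => /andP[? ?]; lra.
have [pol_ge0 pol_sum1] := pol_dist n h.
rewrite W_succ -[Vxi (sigma h)]mul1r -pol_sum1 mulr_suml -sumrB.
under eq_bigr do rewrite -mulrBr.
apply: (subprob_avg_le pol_ge0 (is_dist_sum_le1 (pol_dist n h))) => [|a _].
  exact: disc_err_slack_ge0.
have Qxi_le : Qxi (sigma h) a <= Vxi (sigma h) := maxAct_ge _ a.
have backup_le := ler_normlW (backup_sub_Qxi_le a (W pol N) h_poss).
have next_le : \sum_y py h a y * (W pol N (hext h a y) - Vxi (sigma (hext h a y)))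
    <= disc_err n.+1 N + vmax * gamma ^+ N.
  by apply: py_avg_le => // [|y]; [exact: disc_err_slack_ge0 | exact: IH].
have := ler_wpM2l gamma_ge0 next_le.
rewrite disc_err_succ exprS; lra.
Qed.

Lemma Vxi_sub_W_greedy_le N n (h : hist n) : possible h ->
  Vxi (sigma h) - W greedy N h <= disc_err n N + vmax * gamma ^+ N.
Proof.
elim: N n h => [|N IH] n h h_poss.
  rewrite disc_err0 expr0 mulr1 /= add0r subr0.
  by have := Vxi_norm_le (sigma h); rewrite ler_norml => /andP[? ?]; lra.
rewrite W_greedy_succ.
set a := pistar (sigma h).
have Vxi_Qxi : Vxi (sigma h) = Qxi (sigma h) a by rewrite /Defs.Vxi pistar_greedy.
have := backup_sub_Qxi_le a (W greedy N) h_poss.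
rewrite ler_norml => /andP[backup_ge _].
have next_le : \sum_y py h a y * (Vxi (sigma (hext h a y)) - W greedy N (hext h a y))
    <= disc_err n.+1 N + vmax * gamma ^+ N.
  by apply: py_avg_le => // [|y]; [exact: disc_err_slack_ge0 | exact: IH].
have next_opp : \sum_y py h a y * (W greedy N (hext h a y) - Vxi (sigma (hext h a y)))
    = - \sum_y py h a y * (Vxi (sigma (hext h a y)) - W greedy N (hext h a y)).
  by rewrite -sumrN; apply: eq_bigr => y _; rewrite -mulrN opprB.
have := ler_wpM2l gamma_ge0 next_le.
rewrite next_opp in backup_ge; rewrite disc_err_succ exprS Vxi_Qxi; lra.
Qed.

Lemma Vpi_sub_Vxi_le (pol : policy R Y A) n (h : hist n) b :
  is_policy pol -> possible h -> (forall N, disc_err n N <= b) ->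
  Vpi pol h - Vxi (sigma h) <= b.
Proof.
move=> pol_dist h_poss err_le; rewrite lerBlDr.
apply: (@limn_le_geometric_slack _ _ _ vmax gamma); first by rewrite ger0_norm.
  exact: W_cvg.
by move=> N; have := W_sub_Vxi_le pol_dist N h_poss; have := err_le N; lra.
Qed.

Lemma Vxi_sub_Vgreedy_le n (h : hist n) b :
  possible h -> (forall N, disc_err n N <= b) -> Vxi (sigma h) - Vpi greedy h <= b.
Proof.
move=> h_poss err_le.
have lim_opp : limn (- (fun N => W greedy N h)) = - Vpi greedy h.
  exact: (limN (W_cvg greedy_is_policy (h := h))).
suff : - Vpi greedy h <= b - Vxi (sigma h) by lra.
rewrite -lim_opp.
apply: (@limn_le_geometric_slack _ _ _ vmax gamma); first by rewrite ger0_norm.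
  exact: (is_cvgN (W_cvg greedy_is_policy (h := h))).
move=> N; change (- W greedy N h <= b - Vxi (sigma h) + vmax * gamma ^+ N).
by have := Vxi_sub_W_greedy_le N h_poss; have := err_le N; lra.
Qed.

Lemma Vstar_sub_Vxi_norm_le n (h : hist n) b :
  possible h -> (forall N, disc_err n N <= b) -> `|Vstar h - Vxi (sigma h)| <= b.
Proof.
move=> h_poss err_le.
set values := [set Vpi pol h | pol in [set pol | is_policy pol]].
have values_ub : ubound values (b + Vxi (sigma h)).
  move=> _ [pol pol_dist <-]; have := Vpi_sub_Vxi_le pol_dist h_poss err_le; lra.
have greedy_value : values (Vpi greedy h) by exists greedy => //; exact: greedy_is_policy.
have Vstar_le : Vstar h <= b + Vxi (sigma h).
  by apply: ge_sup => //; exists (Vpi greedy h).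
have Vgreedy_le : Vpi greedy h <= Vstar h.
  by apply: ub_le_sup => //; exists (b + Vxi (sigma h)).
have := Vxi_sub_Vgreedy_le h_poss err_le.
by rewrite ler_norml => ?; apply/andP; split; lra.
Qed.

Lemma Vxi_sub_Vgreedy_norm_le n (h : hist n) b :
  possible h -> (forall N, disc_err n N <= b) -> `|Vxi (sigma h) - Vpi greedy h| <= b.
Proof.
move=> h_poss err_le; rewrite ler_norml Vxi_sub_Vgreedy_le // andbT.
have := Vpi_sub_Vxi_le greedy_is_policy h_poss err_le; lra.
Qed.

Lemma Qstar_sub_Qxi_norm_le n (h : hist n) a b :
  possible h -> (forall N, disc_err n N <= b) -> `|Qstar h a - Qxi (sigma h) a| <= b.
Proof.
move=> h_poss err_le.
set G := gamma * \sum_y py h a y * (Vstar (hext h a y) - Vxi (sigma (hext h a y))).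
have backup_le := backup_sub_Qxi_le a Vstar h_poss.
have step_le : step_err n <= b.
  by have := err_le 1%N; rewrite disc_err_succ disc_err0 mulr0 addr0.
suff G_le : `|G| <= b - step_err n.
  have := ler_normD (Qstar h a - Qxi (sigma h) a - G) G; rewrite subrK; lra.
(* for gamma > 0 the tails disc_err n.+1 are bounded by (b - step_err n) / gamma *)
have [gamma0|gamma_neq0] := eqVneq gamma 0.
  by rewrite /G gamma0 mul0r normr0 subr_ge0.
have gamma_gt0 : 0 < gamma by rewrite lt_def gamma_neq0.
rewrite /G normrM ger0_norm // -ler_pdivlMl //.
apply: py_avg_norm_le => // [|y next_poss].
  by rewrite mulr_ge0 ?subr_ge0 // invr_ge0.
apply: Vstar_sub_Vxi_norm_le => // N.
by rewrite ler_pdivlMl //; have := err_le N.+1; rewrite disc_err_succ; lra.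
Qed.

Local Notation eps := (eps P O nu r f init xi).
Local Notation delta := (delta P O nu f init xi F).
Local Notation rho := (rhoF F Vxi).

Lemma eps_EFin k : eps k = (reward_err k)%:E.
Proof.
rewrite /reward_err (big_morph _ EFin_max (erefl _)); apply: eq_bigr => h _.
by rewrite (big_morph _ EFin_max (erefl _)).
Qed.

Lemma delta_ge0 k : (0 <= delta k)%E.
Proof. exact: bigmax_ge_id. Qed.

Lemma rho_ge0 : (0 <= rho)%E.
Proof. by apply: le_ereal_inf_tmp => _ [x [x_gt0 _] <-]; rewrite lee_fin ltW. Qed.

Lemma le_delta n (h : hist n) a : possible h ->
  (dF F (pz h a) (Pxi (sigma h) a) <= delta n)%E.
Proof.
move=> h_poss; apply: le_trans (le_bigmax_cond _ _ h_poss).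
exact: (le_bigmax _ (fun a => dF F (pz h a) (Pxi (sigma h) a))).
Qed.

Lemma transport_err_le_mul k d p :
  delta k = d%:E -> rho = p%:E -> transport_err k <= d * p.
Proof.
move=> delta_d rho_p.
have d_ge0 : 0 <= d by rewrite -lee_fin -delta_d delta_ge0.
have p_ge0 : 0 <= p by rewrite -lee_fin -rho_p rho_ge0.
apply: bigmax_le => [|h h_poss]; first exact: mulr_ge0.
apply: bigmax_le => [|a _]; first exact: mulr_ge0.
apply: (ipm_gap_le _ rho_p); rewrite -delta_d; exact: le_delta.
Qed.

Lemma disc_err_split n N : disc_err n N =
  \sum_(k < N) gamma ^+ k * reward_err (n + k)
  + gamma * \sum_(k < N) gamma ^+ k * transport_err (n + k).
Proof.
by rewrite /disc_err mulr_sumr -big_split; apply: eq_bigr => k _ /=; rewrite /step_err; ring.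
Qed.

Lemma disc_transport_err_le n N D p : 0 < gamma ->
  (\sum_(0 <= k <oo) ((gamma ^+ k)%:E * delta (n + k)))%E = D%:E -> rho = p%:E ->
  \sum_(k < N) gamma ^+ k * transport_err (n + k) <= D * p.
Proof.
move=> gamma_gt0 series_D rho_p.
have p_ge0 : 0 <= p by rewrite -lee_fin -rho_p rho_ge0.
have term_ge0 k : (0 <= (gamma ^+ k)%:E * delta (n + k))%E.
  by rewrite mule_ge0 ?lee_fin ?exprn_ge0 ?delta_ge0 // ltW.
have partial_le M : (\sum_(0 <= k < M) (gamma ^+ k)%:E * delta (n + k) <= D%:E)%E.
  by rewrite -series_D; exact: nneseries_lim_ge.
(* gamma ^+ k > 0, so a finite series forces every delta (n + k) to be finite *)
have delta_fin k : delta (n + k) \is a fin_num.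
  rewrite ge0_fin_numE ?delta_ge0 // ltey; apply/eqP => delta_inf.
  have := partial_le k.+1; rewrite big_nat_recr //= delta_inf.
  rewrite gt0_muley ?lte_fin ?exprn_gt0 // addey ?leye_eq //.
  rewrite gt_eqF // (lt_le_trans ltNy0) // sume_ge0 // => i _; exact: term_ge0.
apply: le_trans (_ : \sum_(k < N) gamma ^+ k * fine (delta (n + k)) * p <= _).
  apply: ler_sum => k _; rewrite -mulrA ler_wpM2l ?exprn_ge0 //.
  by apply: (transport_err_le_mul _ rho_p); rewrite fineK.
rewrite -mulr_suml ler_wpM2r // -lee_fin -sumEFin.
apply: le_trans (partial_le N); rewrite big_mkord.
by apply: lee_sum => k _; rewrite EFinM fineK.
Qed.

Lemma eps_series_ge0 n : (0 <= \sum_(0 <= k <oo) (gamma ^+ k)%:E * eps (n + k))%E.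
Proof.
apply: nneseries_ge0 => k _ _.
by rewrite eps_EFin -EFinM lee_fin mulr_ge0 ?exprn_ge0 ?reward_err_ge0.
Qed.

Lemma delta_series_ge0 n : (0 <= \sum_(0 <= k <oo) (gamma ^+ k)%:E * delta (n + k))%E.
Proof.
by apply: nneseries_ge0 => k _ _; rewrite mule_ge0 ?lee_fin ?exprn_ge0 ?delta_ge0.
Qed.

Lemma disc_reward_err_le n N :
  ((\sum_(k < N) gamma ^+ k * reward_err (n + k))%:E
     <= \sum_(0 <= k <oo) (gamma ^+ k)%:E * eps (n + k))%E.
Proof.
apply: le_trans (nneseries_lim_ge N _) => [|k _ _]; last first.
  by rewrite eps_EFin -EFinM lee_fin mulr_ge0 ?exprn_ge0 ?reward_err_ge0.
by rewrite big_mkord -sumEFin; apply: lee_sum => k _; rewrite eps_EFin EFinM.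
Qed.

Lemma disc_transport_err_le_mulinf n N :
  (((1 - gamma) * (gamma * \sum_(k < N) gamma ^+ k * transport_err (n + k)))%:E
     <= mulinf gamma%:E (mulinf ((1 - gamma)%:E *
          \sum_(0 <= k <oo) (gamma ^+ k)%:E * delta (n + k)) rho))%E.
Proof.
set DD := (\sum_(0 <= k <oo) _)%E.
have gamma1_gt0 : 0 < 1 - gamma by rewrite subr_gt0.
have gamma1_ge0 : 0 <= 1 - gamma := ltW gamma1_gt0.
have DD_ge0 : (0 <= DD)%E := delta_series_ge0 n.
apply: EFin_le_mulinf; rewrite ?mulinf_ge0 ?mule_ge0 ?rho_ge0 ?lee_fin //.
move=> _ q [<-] inner_q.
have [->|gamma_neq0] := eqVneq gamma 0; first by rewrite !(mul0r, mulr0).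
have gamma_gt0 : 0 < gamma by rewrite lt_def gamma_neq0.
rewrite mulrCA ler_wpM2l // -lee_fin -inner_q.
apply: EFin_le_mulinf; rewrite ?mule_ge0 ?rho_ge0 ?lee_fin //.
move=> d p DD_d rho_p.
have [D DD_D] : exists D, DD = D%:E.
  move: DD_d DD_ge0; case: (DD) => [D _ _| |] //; first by exists D.
  by rewrite gt0_muley ?lte_fin.
move: DD_d; rewrite DD_D -EFinM => -[<-].
by rewrite -mulrA ler_wpM2l //; exact: (disc_transport_err_le _ gamma_gt0 DD_D rho_p).
Qed.

Lemma disc_err_le_bound n N :
  ((disc_err n N)%:E <= bound P O nu r gamma f init xi F Qxi n)%E.
Proof.
have gamma1_gt0 : 0 < 1 - gamma by rewrite subr_gt0.
have gamma1_ge0 : 0 <= 1 - gamma := ltW gamma1_gt0.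
rewrite /bound /discbar ge0_muleDr ?mulinf_ge0 ?mule_ge0 ?lee_fin ?rho_ge0
  ?eps_series_ge0 ?delta_series_ge0 //.
rewrite muleA -EFinM mulVf ?gt_eqF // mul1e disc_err_split EFinD.
rewrite leeD ?disc_reward_err_le // -[gamma * _](mulKf (lt0r_neq0 gamma1_gt0)).
by rewrite EFinM lee_wpmul2l ?disc_transport_err_le_mulinf // lee_fin invr_ge0.
Qed.

End AgentStateComparison.

Theorem theorem3 (R : realType) (S Y A Z : finType)
  (P : S -> A -> S -> R) (O : S -> A -> Y -> R) (nu : S -> Y -> R)
  (r : S -> A -> R) (gamma : R)
  (f : Z -> Y -> A -> Z) (init : Y -> Z)
  (piexpl : Z -> A -> R) (xi : S -> Y -> Z -> A -> R)
  (Qxi : Z -> A -> R) (pistar : Z -> A) (F : set (Z -> R)) :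
  (forall s a, is_dist (P s a)) ->
  (forall s' a, is_dist (O s' a)) ->
  is_dist (fun sy : S * Y => nu sy.1 sy.2) ->
  0 <= gamma < 1 ->
  (forall z, is_dist (piexpl z)) ->
  is_stationary P O f piexpl xi ->
  (forall xi', is_stationary P O f piexpl xi' -> xi' = xi) ->
  (forall s y z a, 0 < xi s y z a) ->
  is_Qxi P O r gamma f xi Qxi ->
  (forall z, Qxi z (pistar z) = maxAct (Qxi z)) ->
  forall (n : nat) (h : hist Y A n) (a : A), possible P O nu h ->
  let B := bound P O nu r gamma f init xi F Qxi n in
  [/\ ((`| Qstar P O nu r gamma h a - Qxi (sigma f init h) a |)%:E <= B)%E,
      ((`| Vstar P O nu r gamma h - Vxi Qxi (sigma f init h) |)%:E <= B)%E &
      ((`| Vstar P O nu r gamma h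
           - Vpi P O nu r gamma (pol_of_agent R f init pistar) h |)%:E
         <= 2%:E * B)%E].
Proof.
move=> P_dist O_dist nu_dist /andP[gamma_ge0 gamma_lt1] _ _ _ _ Qxi_fixpoint
  pistar_greedy n h a h_poss B; rewrite {}/B.
have := disc_err_le_bound P O nu r f init xi Qxi F gamma_ge0 gamma_lt1 n.
case: (bound P O nu r gamma f init xi F Qxi n) => [beta| |] err_le.
- have {}err_le N : disc_err P O nu r gamma f init xi Qxi n N <= beta.
    by rewrite -lee_fin.
  rewrite -EFinM !lee_fin mulr_natl mulr2n; split.
  + by apply: Qstar_sub_Qxi_norm_le.
  + by apply: Vstar_sub_Vxi_norm_le.
  + rewrite -(subrK (Vxi Qxi (sigma f init h)) (Vstar P O nu r gamma h)) -addrA.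
    apply: le_trans (ler_normD _ _) (lerD _ _).
      by apply: Vstar_sub_Vxi_norm_le.
    by apply: Vxi_sub_Vgreedy_norm_le.
- by split; rewrite ?leey // gt0_muley ?leey.
- by have := err_le 0%N; rewrite disc_err0 leeNy_eq.
Qed.
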